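(* There is an absolute constant $C>0$ such that the following holds. Let $\ell,w\in\mathbb{N}$, $\Delta=2^\ell$, $\mathbf{s}\in\mathbb{R}_{\ge0}^{G_\Delta}$, and let $\boldsymbol{\nu}_i\in\mathbb{R}^{C_{2^i}}$ ($i=0,\dots,\ell$) be arbitrary vectors. Set $\mathbf{y}'_i=2^{-i}(\mathbf{P}_i\mathbf{s}+\boldsymbol{\nu}_i)$ and $\mathbf{y}'=[\mathbf{y}'_0\cdots\mathbf{y}'_\ell]$. Run the following procedure: $S_0=C_1$; for $i=1,\dots,\ell$, let $T_i$ be the set of children of cells in $S_{i-1}$ and let $S_i$ be a set of $\min\{w,|T_i|\}$ cells of $T_i$ with the largest values of $\mathbf{y}'$ (ties broken arbitrarily); let $S=\bigcup_{i=0}^\ell S_i$ and $\hat{\mathbf{y}}=\mathbf{y}'|_S$. Let $\mathbf{y}^*\in\arg\min_{\mathbf{y}\in\mathcal{M}_w}\|\mathbf{P}\mathbf{s}-\mathbf{y}\|_1$, let $T^*\in\mathcal{T}_w$ be such that $\mathrm{supp}(\mathbf{y}^* )\subseteq T^*$, and for $i=0,\dots,\ell$ let $T^*_i=T^*\cap C_{2^i}$ and $V_i=T^*_i\setminus S_i$. Then $$\|\hat{\mathbf{y}}-\mathbf{P}\mathbf{s}\|_1\le 3\|\mathbf{y}^*-\mathbf{P}\mathbf{s}\|_1+C\sum_{i=0}^{\ell}2^{-i}\big\|\boldsymbol{\nu}_i|_{V_i\cup S_i}\big\|_1.$$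
   Context: $G_\Delta=\{(a/\Delta,b/\Delta): a,b\in\{0,\dots,\Delta-1\}\}$. For $i\ge0$, the level-$i$ cells are $C_{2^i}=\{[a,a+2^{-i})\times[b,b+2^{-i}) : (a,b)\in G_{2^i}\}$ (so $C_1=C_{2^0}$ consists of the single root cell $[0,1)^2$). $\mathbf{P}_i\in\{0,1\}^{C_{2^i}\times G_\Delta}$ has $\mathbf{P}_i(c,p)=1$ iff $p\in c$. The scaled pyramidal transform $\mathbf{P}$ is the matrix with rows indexed by $\bigcup_{i=0}^\ell C_{2^i}$ obtained by stacking $\mathbf{P}_0,2^{-1}\mathbf{P}_1,\dots,2^{-\ell}\mathbf{P}_\ell$. Vectors indexed by $\bigcup_i C_{2^i}$ are written $\mathbf{y}=[\mathbf{y}_0\cdots\mathbf{y}_\ell]$ with $\mathbf{y}_i\in\mathbb{R}^{C_{2^i}}$. A cell $c'\in C_{2^i}$ ($i\ge1$) is a child of $c\in C_{2^{i-1}}$ if $c'\subseteq c$; this makes the cells a tree rooted at $[0,1)^2$ with every internal node having four children. $\mathcal{T}_w$ is the set of subtrees (sets of cells containing the root and closed under taking parents) with at most $w$ cells at each level. $\mathcal{M}_w$ is the set of $\mathbf{y}=[\mathbf{y}_0\cdots\mathbf{y}_\ell]$ with $\mathbf{y}_i\in\mathbb{R}_{\ge0}^{C_{2^i}}$ such that (1) $\mathrm{supp}(\mathbf{y})\subseteq T$ for some $T\in\mathcal{T}_w$, and (2) for all $i\in\{0,\dots,\ell-1\}$ and $p\in C_{2^i}$, $\mathbf{y}(p)\ge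 2\sum_{c\text{ child of }p}\mathbf{y}(c)$. For a vector $\mathbf{v}$ and index set $S$, $\mathbf{v}|_S$ agrees with $\mathbf{v}$ on $S$ and is $0$ elsewhere; $\mathrm{supp}$ denotes the set of nonzero coordinates. *)

From HB Require Import structures.
From mathcomp Require Import all_boot all_order all_algebra.
From mathcomp Require Import reals.
Set Implicit Arguments. Unset Strict Implicit. Unset Printing Implicit Defensive.
Import Order.TTheory GRing.Theory Num.Theory.
Local Open Scope ring_scope.

Section Pyramid.
Variable l : nat. (* Delta = 2^l *)

(* grid points of G_Delta: (a,b) stands for (a/Delta, b/Delta) *)
Definition point := ('I_(2 ^ l) * 'I_(2 ^ l))%type.

(* a cell (i,a,b) is [a/2^i,(a+1)/2^i) x [b/2^i,(b+1)/2^i), with a,b < 2^i, i <= l *)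
Definition raw_cell := ('I_l.+1 * 'I_(2 ^ l) * 'I_(2 ^ l))%type.
Definition valid_cell (c : raw_cell) : bool :=
  (nat_of_ord c.1.2 < 2 ^ c.1.1)%N && (nat_of_ord c.2 < 2 ^ c.1.1)%N.
Definition cell := {c : raw_cell | valid_cell c}.

Definition level (c : cell) : nat := (sval c).1.1.
Definition cx (c : cell) : nat := (sval c).1.2.
Definition cy (c : cell) : nat := (sval c).2.

Definition in_cell (c : cell) (p : point) : bool :=
  ((nat_of_ord p.1) %/ 2 ^ (l - level c) == cx c)%N &&
  ((nat_of_ord p.2) %/ 2 ^ (l - level c) == cy c)%N.

Definition is_child (c' c : cell) : bool :=
  [&& level c' == (level c).+1, (cx c' %/ 2 == cx c)%N & (cy c' %/ 2 == cy c)%N].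

Variable R : realType.

Definition Pi_s (s : point -> R) (c : cell) : R := \sum_(p | in_cell c p) s p.
Definition Ps (s : point -> R) (c : cell) : R := ((2 : R) ^+ level c)^-1 * Pi_s s c.

Definition norm1 (v : cell -> R) : R := \sum_c `|v c|.

Definition subtree (T : {set cell}) : Prop :=
  (forall c, level c = 0%N -> c \in T) /\
  (forall c' c, is_child c' c -> c' \in T -> c \in T).

Definition tree_w (w : nat) (T : {set cell}) : Prop :=
  subtree T /\ forall i : nat, (#|[set c in T | level c == i]| <= w)%N.

Definition M_w (w : nat) (y : cell -> R) : Prop :=
  (forall c, 0 <= y c) /\
  (exists T, tree_w w T /\ forall c, y c != 0 -> c \in T) /\
  (forall p, (level p < l)%N -> 2 * \sum_(c | is_child c p) y c <= y p).

Definition children (A : {set cell}) : {set cell} :=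
  [set c | [exists p in A, is_child c p]].

(* S is a valid run of the greedy procedure on y' with width w
   (ties broken arbitrarily) *)
Definition greedy_run (w : nat) (y' : cell -> R) (S : nat -> {set cell}) : Prop :=
  S 0%N = [set c | level c == 0%N] /\
  forall i : nat, (0 < i <= l)%N ->
    [/\ S i \subset children (S i.-1),
        #|S i| = minn w #|children (S i.-1)| &
        forall c c', c \in S i -> c' \in children (S i.-1) :\: S i -> y' c' <= y' c].

End Pyramid.

From HB Require Import structures.
From mathcomp Require Import all_boot all_order all_algebra.
From mathcomp Require Import reals.
From mathcomp Require Import lra zify.
Import Order.TTheory GRing.Theory Num.Theory.
Set Implicit Arguments. Unset Strict Implicit. Unset Printing Implicit Defensive.
Local Open Scope ring_scope.

(* At level i the loss of the greedy estimate splits into the noise on the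
   selected cells, the error of [ystar] on cells outside [Tstar], and the mass
   m_i of the missed cells of [Tstar].  A missed cell either has a missed
   parent, and the children of a cell carry at most half of its mass, or is a
   child of a selected cell; then it lost the greedy comparison to a selected
   cell outside [Tstar], and since both trees have width w there are enough of
   those to pay for it with r_i, the error of [ystar] on them plus noise.  Hence
   m_i <= r_i + m_{i-1} / 2, so sum_i m_i <= 2 sum_i r_i. *)

Lemma ler_sum_card (R : numDomainType) (T : finType) (A B : {set T}) (f g : T -> R) :
  (#|A| <= #|B|)%N -> {in B, forall b, 0 <= g b} ->
  {in A & B, forall a b, f a <= g b} ->
  \sum_(a in A) f a <= \sum_(b in B) g b.
Proof.
elim: {A}#|A| {-2}A (erefl #|A|) B => [|n IH] A cardA B leAB g_ge0 fg.
  by move/eqP: cardA; rewrite cards_eq0 => /eqP->; rewrite big_set0 sumr_ge0.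
have [a Aa] : {a | a \in A} by apply/sigW/set0Pn; rewrite -card_gt0 cardA.
have [b Bb] : {b | b \in B}.
  by apply/sigW/set0Pn; rewrite -card_gt0 (leq_trans _ leAB) // cardA.
rewrite (big_setD1 a Aa) (big_setD1 b Bb) lerD ?fg //=.
have := cardsD1 a A; have := cardsD1 b B; rewrite Aa Bb => cardB cardA'.
apply: IH; first lia; first lia.
- by move=> c; rewrite in_setD1 => /andP[_ /g_ge0].
- by move=> c d; rewrite !in_setD1 => /andP[_ Ac] /andP[_ Bd]; apply: fg.
Qed.

Lemma sum_halving_recurrence (R : realFieldType) (a r : nat -> R) (n : nat) :
  0 <= a n -> a 0%N <= r 0%N ->
  (forall i, (0 < i <= n)%N -> a i <= r i + a i.-1 / 2) ->
  \sum_(i < n.+1) a i <= 2 * \sum_(i < n.+1) r i.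
Proof.
move=> an_ge0 a0 a_rec.
suff inv k : (k <= n)%N -> \sum_(i < k.+1) a i + a k <= 2 * \sum_(i < k.+1) r i.
  by have := inv n (leqnn n); lra.
elim: k => [|k IH] lekn; first by rewrite !big_ord1; lra.
rewrite big_ord_recr [in leRHS]big_ord_recr /=.
by have := IH (ltnW lekn); have := a_rec k.+1 lekn; lra.
Qed.

Lemma level_le l (c : cell l) : (level c <= l)%N.
Proof. by case: c => [[[i a] b] ?]; rewrite /level /= -ltnS. Qed.

Lemma eq_cell l (c c' : cell l) :
  level c = level c' -> cx c = cx c' -> cy c = cy c' -> c = c'.
Proof.
case: c c' => [[[i a] b] ?] [[[i' a'] b'] ?].
rewrite /level /cx /cy /= => /ord_inj Ei /ord_inj Ea /ord_inj Eb; subst.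
by congr exist; apply: bool_irrelevance.
Qed.

Lemma level_child l (c p : cell l) : is_child c p -> level c = (level p).+1.
Proof. by case/and3P => /eqP. Qed.

Lemma exists_parent l (c : cell l) : (0 < level c)%N -> exists p, is_child c p.
Proof.
case: c => [[[i a] b] v]; have /andP[ai bi] := v; rewrite /level /= => i_gt0.
have i' : (i.-1 < l.+1)%N by rewrite (leq_ltn_trans (leq_pred _)).
have a' : (a %/ 2 < 2 ^ l)%N by rewrite (leq_ltn_trans (leq_div _ _)).
have b' : (b %/ 2 < 2 ^ l)%N by rewrite (leq_ltn_trans (leq_div _ _)).
have v' : valid_cell ((Ordinal i', Ordinal a'), Ordinal b').
  by rewrite /valid_cell /= !ltn_divLR // -expnSr prednK // ai bi.
exists (exist (@valid_cell l) _ v').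
by rewrite /is_child /level /cx /cy /= prednK // !eqxx.
Qed.

Lemma in_cell_parent l (c p : cell l) q : is_child c p -> in_cell c q -> in_cell p q.
Proof.
move=> cp; have lc := level_child cp; rewrite /in_cell.
have -> : (2 ^ (l - level p) = 2 ^ (l - level c) * 2)%N.
  by rewrite -expnSr lc subnSK // -lc level_le.
case/and3P: cp => _ /eqP <- /eqP <-.
by rewrite !divnMA => /andP[/eqP-> /eqP->]; rewrite !eqxx.
Qed.

Lemma child_in_cell_uniq l (c c' p : cell l) q :
  is_child c p -> in_cell c q -> is_child c' p -> in_cell c' q -> c = c'.
Proof.
move=> cp cq c'p c'q; have E : level c = level c'.
  by rewrite (level_child cp) (level_child c'p).
move: cq c'q; rewrite /in_cell E => /andP[/eqP xq /eqP yq] /andP[/eqP x'q /eqP y'q].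
by apply: eq_cell; rewrite // -?xq -?yq.
Qed.

Section Masses.
Variables (R : realType) (l : nat) (s : point l -> R).
Hypothesis s_ge0 : forall q, 0 <= s q.

Lemma Pi_s_children (p : cell l) : \sum_(c | is_child c p) Pi_s s c <= Pi_s s p.
Proof.
rewrite /Pi_s (exchange_big_dep (in_cell p)) => [|c q]; last exact: in_cell_parent.
apply: ler_sum => q _.
have [c0 /andP[c0p c0q]|none] := pickP (fun c => is_child c p && in_cell c q).
  rewrite (bigD1 c0) ?c0p ?c0q //= big1 ?addr0 // => c /andP[/andP[cp cq] /eqP[]].
  exact: child_in_cell_uniq cq c0p c0q.
by rewrite big_pred0.
Qed.

Lemma Ps_ge0 (c : cell l) : 0 <= Ps s c.
Proof. by rewrite /Ps mulr_ge0 ?invr_ge0 ?exprn_ge0 ?sumr_ge0. Qed.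

Lemma Ps_children (p : cell l) : \sum_(c | is_child c p) Ps s c <= Ps s p / 2.
Proof.
under eq_bigr => c cp do rewrite /Ps (level_child cp) exprSr invfM.
rewrite -mulr_sumr /Ps mulrAC ler_wpM2r ?invr_ge0 //.
by rewrite ler_wpM2l ?invr_ge0 ?exprn_ge0 ?Pi_s_children.
Qed.

End Masses.

Definition level_set l (i : nat) : {set cell l} := [set c | level c == i].

Lemma sum_by_level (R : nmodType) l (F : cell l -> R) :
  \sum_c F c = \sum_(i < l.+1) \sum_(c in level_set l i) F c.
Proof.
rewrite (partition_big (fun c : cell l => inord (level c) : 'I_l.+1) xpredT) //=.
apply: eq_bigr => i _; apply: eq_bigl => c.
by rewrite inE -(inj_eq val_inj) /= inordK // ltnS level_le.
Qed.

Section GreedyRecovery.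
Variables (R : realType) (l w : nat) (s : point l -> R) (nu : cell l -> R).
Variables (S : nat -> {set cell l}) (ystar : cell l -> R) (Tstar : {set cell l}).
Hypothesis s_ge0 : forall p, 0 <= s p.

Definition noisy_Ps (c : cell l) : R := ((2 : R) ^+ level c)^-1 * (Pi_s s c + nu c).
Definition scaled_noise (c : cell l) : R := ((2 : R) ^+ level c)^-1 * nu c.

Hypothesis greedy : greedy_run w noisy_Ps S.
Hypothesis Tstar_tree : tree_w w Tstar.
Hypothesis ystar_supp : forall c, ystar c != 0 -> c \in Tstar.

Definition greedy_estimate (c : cell l) : R :=
  if c \in \bigcup_(i < l.+1) S i then noisy_Ps c else 0.
Definition missed i := [set c in Tstar | level c == i] :\: S i.
Definition missed_mass i := \sum_(c in missed i) Ps s c.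
Definition err_unselected i :=
  \sum_(c in level_set l i :\: S i :\: Tstar) `|ystar c - Ps s c|.
Definition err_selected i := \sum_(c in S i :\: Tstar) `|ystar c - Ps s c|.
Definition level_noise i :=
  \sum_(c | (level c == i) && (c \in missed i :|: S i)) `|scaled_noise c|.

Lemma noisy_PsE c : noisy_Ps c = Ps s c + scaled_noise c.
Proof. by rewrite /noisy_Ps /Ps /scaled_noise mulrDr. Qed.

Lemma ystar_out c : c \notin Tstar -> ystar c = 0.
Proof. exact/contraNeq/ystar_supp. Qed.

Lemma level_greedy j c : (j <= l)%N -> c \in S j -> level c = j.
Proof.
case: greedy => S0 Sstep; elim: j c => [|j IH] c lejl; first by rewrite S0 inE => /eqP.
have [/subsetP sub _ _] := Sstep j.+1 lejl.
move=> /sub; rewrite inE => /existsP[p /andP[Sp cp]].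
by rewrite (level_child cp) (IH p (ltnW lejl) Sp).
Qed.

Lemma mem_greedy_union c : (c \in \bigcup_(i < l.+1) S i) = (c \in S (level c)).
Proof.
apply/bigcupP/idP => [[i _ Sc]|Sc].
  by rewrite (level_greedy (ltnSE (ltn_ord i)) Sc).
by exists (inord (level c)); rewrite // inordK // ltnS level_le.
Qed.

Lemma level_loss_le i : (i <= l)%N ->
  \sum_(c in level_set l i) `|greedy_estimate c - Ps s c|
    <= \sum_(c in S i) `|scaled_noise c| + err_unselected i + missed_mass i.
Proof.
move=> il; rewrite /err_unselected /missed_mass.
rewrite !(big_mkcond (fun c => c \in _)) -!big_split /=.
apply: ler_sum => c _; rewrite !inE /greedy_estimate mem_greedy_union.
have [ci|nci] := eqVneq (level c) i; last first.
  have /negPf nSc : c \notin S i by apply: contra nci => /(level_greedy il)->.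
  by rewrite nSc !andbF !addr0.
rewrite ci !andbT.
have [Sc|nSc] := boolP (c \in S i).
  by rewrite noisy_PsE (addrC (Ps s c)) addrK !andbF /= !addr0.
rewrite sub0r normrN ger0_norm ?Ps_ge0 // add0r.
have [Tc|nTc] := boolP (c \in Tstar); first by rewrite add0r.
by rewrite ystar_out // sub0r normrN ger0_norm ?Ps_ge0 // addr0.
Qed.

Lemma err_split i : (i <= l)%N ->
  err_unselected i + err_selected i <= \sum_(c in level_set l i) `|ystar c - Ps s c|.
Proof.
move=> il; rewrite /err_unselected /err_selected.
rewrite !(big_mkcond (fun c => c \in _)) -big_split /=.
apply: ler_sum => c _; rewrite !inE.
have [Sc|nSc] := boolP (c \in S i).
  by rewrite (level_greedy il Sc) eqxx; case: (c \in Tstar); rewrite /= ?add0r.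
by case: (c \in Tstar); case: (level c == i); rewrite /= ?addr0.
Qed.

Lemma selected_noise_le i : (i <= l)%N ->
  \sum_(c in S i) `|scaled_noise c| <= level_noise i.
Proof.
move=> il; rewrite /level_noise [leRHS]big_mkcond (big_mkcond (fun c => c \in _)) /=.
apply: ler_sum => c _; case: ifP => Sc; last by case: ifP.
by rewrite (level_greedy il Sc) eqxx inE Sc orbT.
Qed.

Lemma missed_mass0 : missed_mass 0 = 0.
Proof.
case: greedy => S0 _; apply: big_pred0 => c.
by rewrite /missed S0 !inE; case: (level c == 0%N); rewrite ?andbF.
Qed.

Lemma card_missed_children i : (0 < i <= l)%N ->
  (#|missed i :&: children (S i.-1)| <= #|S i :\: Tstar|)%N.
Proof.
move=> i_range; have [sub cardS _] := greedy.2 i i_range.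
have [->|[r]] := set_0Vmem (missed i :&: children (S i.-1)); first by rewrite cards0.
rewrite in_setI in_setD => /andP[/andP[nSr _] ch_r].
have full : #|S i| = w.
  have : (#|r |: S i| <= #|children (S i.-1)|)%N.
    by apply/subset_leq_card; rewrite subUset sub1set ch_r sub.
  by rewrite cardsU1 nSr; move: cardS; lia.
have Ti_S : [set c in Tstar | level c == i] :&: S i = S i :&: Tstar.
  apply/setP => c; rewrite !inE; have [Sc|] := boolP (c \in S i); last by rewrite andbF.
  by rewrite (level_greedy (proj2 (andP i_range)) Sc) eqxx !andbT.
have := cardsID (S i) [set c in Tstar | level c == i]; rewrite Ti_S.
have := cardsID Tstar (S i); have := Tstar_tree.2 i.
have : (#|missed i :&: children (S i.-1)| <= #|missed i|)%N.
  by rewrite subset_leq_card ?subsetIl.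
rewrite /missed; lia.
Qed.

(* A missed child lost the greedy comparison to every selected cell outside
   [Tstar], and there are at least as many of those as missed children. *)
Lemma missed_children_mass i : (0 < i <= l)%N ->
  \sum_(c in missed i :&: children (S i.-1)) (Ps s c - `|scaled_noise c|)
    <= \sum_(c in S i :\: Tstar) (`|ystar c - Ps s c| + `|scaled_noise c|).
Proof.
move=> i_range; have [_ _ greedy_order] := greedy.2 i i_range.
apply: ler_sum_card (card_missed_children i_range) _ _ => [b _|r b].
  by rewrite addr_ge0.
rewrite !inE => /andP[/andP[nSr _] ch_r] /andP[nTb Sb].
have := greedy_order b r Sb; rewrite !inE nSr ch_r => /(_ isT).
rewrite !noisy_PsE ystar_out // sub0r normrN (ger0_norm (Ps_ge0 s_ge0 b)).
have := ler_norm (scaled_noise b); have := ler_norm (- scaled_noise r).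
rewrite normrN; lra.
Qed.

Lemma missed_orphans_mass i : (0 < i)%N ->
  \sum_(c in missed i :\: children (S i.-1)) Ps s c <= missed_mass i.-1 / 2.
Proof.
move=> i_gt0; rewrite /missed_mass mulr_suml.
apply: le_trans (ler_sum _ (fun p _ => Ps_children s_ge0 p)).
rewrite (exchange_big_dep xpredT) //= (big_mkcond (fun c => c \in _)) /=.
apply: ler_sum => c _; case: ifP => [|_].
  2: by rewrite sumr_ge0 // => p _; exact: Ps_ge0.
rewrite !inE => /andP[nch /andP[nSc /andP[Tc /eqP lc]]].
have [p cp] : exists p, is_child c p by apply: exists_parent; rewrite lc.
have missed_p : p \in missed i.-1.
  have lp : level p = i.-1 by rewrite -lc (level_child cp).
  rewrite !inE lp eqxx (Tstar_tree.1.2 c p cp Tc) !andbT.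
  by apply: contra nch => Sp; apply/existsP; exists p; rewrite Sp.
rewrite (bigD1 p) ?missed_p ?cp //= lerDl sumr_ge0 // => q _; exact: Ps_ge0.
Qed.

Lemma missed_noise_le i : (i <= l)%N ->
  \sum_(c in missed i :&: children (S i.-1)) `|scaled_noise c|
    + \sum_(c in S i :\: Tstar) `|scaled_noise c| <= level_noise i.
Proof.
move=> il; rewrite /level_noise !(big_mkcond (fun c => c \in _)) [leRHS]big_mkcond.
rewrite -big_split /=; apply: ler_sum => c _; rewrite !inE.
have [Sc|nSc] := boolP (c \in S i).
  by rewrite (level_greedy il Sc) eqxx orbT /=; case: (c \in Tstar); rewrite /= ?add0r.
rewrite andbF orbF addr0 /=.
by case: (c \in Tstar); case: (level c == i) => //=; case: ifP.
Qed.

Lemma missed_mass_step i : (0 < i <= l)%N ->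
  missed_mass i <= (err_selected i + level_noise i) + missed_mass i.-1 / 2.
Proof.
move=> i_range; have /andP[i_gt0 il] := i_range.
rewrite /missed_mass (big_setID (children (S i.-1))) /=.
have := missed_children_mass i_range; rewrite sumrB big_split /=.
have := missed_orphans_mass i_gt0; have := missed_noise_le il.
rewrite /err_selected /missed_mass; lra.
Qed.

Lemma sum_missed_mass :
  \sum_(i < l.+1) missed_mass i <= 2 * \sum_(i < l.+1) (err_selected i + level_noise i).
Proof.
have mass_ge0 i : 0 <= missed_mass i by rewrite sumr_ge0 // => c _; exact: Ps_ge0.
apply: sum_halving_recurrence (mass_ge0 l) _ missed_mass_step.
by rewrite missed_mass0 addr_ge0 ?sumr_ge0.
Qed.

Lemma greedy_error_bound :
  norm1 (fun c => greedy_estimate c - Ps s c)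
    <= 2 * norm1 (fun c => ystar c - Ps s c) + 3 * \sum_(i < l.+1) level_noise i.
Proof.
rewrite /norm1 !(sum_by_level (l := l)).
have loss :
    \sum_(i < l.+1) \sum_(c in level_set l i) `|greedy_estimate c - Ps s c|
    <= \sum_(i < l.+1)
         (\sum_(c in S i) `|scaled_noise c| + err_unselected i + missed_mass i).
  by apply: ler_sum => i _; apply: level_loss_le; rewrite -ltnS.
have noise : \sum_(i < l.+1) \sum_(c in S i) `|scaled_noise c|
    <= \sum_(i < l.+1) level_noise i.
  by apply: ler_sum => i _; apply: selected_noise_le; rewrite -ltnS.
have err : \sum_(i < l.+1) (err_unselected i + err_selected i)
    <= \sum_(i < l.+1) \sum_(c in level_set l i) `|ystar c - Ps s c|.
  by apply: ler_sum => i _; apply: err_split; rewrite -ltnS.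
have unsel_ge0 : 0 <= \sum_(i < l.+1) err_unselected i.
  by do 2!apply: sumr_ge0 => ? _.
have sel_ge0 : 0 <= \sum_(i < l.+1) err_selected i.
  by do 2!apply: sumr_ge0 => ? _.
have := sum_missed_mass; rewrite !big_split /= in loss err *; lra.
Qed.

Lemma level_noiseE i :
  level_noise i = ((2 : R) ^+ i)^-1 *
    \sum_(c | (level c == i) && (c \in missed i :|: S i)) `|nu c|.
Proof.
rewrite mulr_sumr; apply: eq_bigr => c /andP[/eqP <- _].
by rewrite normrM ger0_norm // invr_ge0 exprn_ge0.
Qed.

End GreedyRecovery.

Theorem lemma3 :
  exists C : nat, (0 < C)%N /\
  forall (R : realType) (l w : nat) (s : point l -> R) (nu : cell l -> R)
         (S : nat -> {set cell l}) (ystar : cell l -> R) (Tstar : {set cell l}),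
    (forall p, 0 <= s p) ->
    let y' := fun c : cell l => ((2 : R) ^+ level c)^-1 * (Pi_s s c + nu c) in
    greedy_run w y' S ->
    M_w w ystar ->
    (forall y, M_w w y -> norm1 (fun c => Ps s c - ystar c) <= norm1 (fun c => Ps s c - y c)) ->
    tree_w w Tstar ->
    (forall c, ystar c != 0 -> c \in Tstar) ->
    let Sall := \bigcup_(i < l.+1) S i in
    let yhat := fun c => if c \in Sall then y' c else 0 in
    let V := fun i : nat => [set c in Tstar | level c == i] :\: S i in
    norm1 (fun c => yhat c - Ps s c)
      <= 3 * norm1 (fun c => ystar c - Ps s c)
         + C%:R * \sum_(i < l.+1) ((2 : R) ^+ i)^-1 *
              \sum_(c | (level c == i) && (c \in V i :|: S i)) `|nu c|.
Proof.
exists 3%N; split=> // R l w s nu S ystar Tstar s_ge0 y' greedy _ _ Tstar_tree ystar_supp.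
apply: le_trans (greedy_error_bound s_ge0 greedy Tstar_tree ystar_supp) _.
rewrite lerD ?ler_wpM2r ?sumr_ge0 ?ler_nat //.
by under eq_bigr => i _ do rewrite level_noiseE.
Qed.
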